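(* Let $g_1,\dots,g_r\in\mathbb R[X_1,\dots,X_n]$ satisfy $1-\|\mathbf X\|_2^2\in\mathcal Q(\mathbf g)$ and $\|g_i\|\le\tfrac12$, with $S=\mathcal S(\mathbf g)\neq\emptyset$. Let $f\in\mathbb R[\mathbf X]$ of degree $d$ with $f^*=\min_{x\in S}f(x)>0$, and assume there exists $x\in[-1,1]^n\setminus S$ with $f(x)\le0$. Let $A=\{x\in[-1,1]^n: f(x)\le \tfrac{3f^*}{4}\}$. Then $d_H(A,S)\ge\dfrac{\epsilon(f)}{8d^2}$.
   Context: $\Sigma^2$ sums of squares, $\mathcal S(\mathbf g)=\{x:g_i(x)\ge0\ \forall i\}$, $\mathcal Q(\mathbf g)=\Sigma^2+\sum_i\Sigma^2g_i$, $\|h\|=\max_{[-1,1]^n}|h|$, $\|\mathbf X\|_2^2=\sum X_i^2$, $\epsilon(f)=f^*/\|f\|$. $d_H(A,B)=\max\{\sup_{a\in A}\operatorname{dist}(a,B),\sup_{b\in B}\operatorname{dist}(b,A)\}$ is the Hausdorff distance (Euclidean). *)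

From HB Require Import structures.
From mathcomp Require Import all_boot all_order all_algebra.
From mathcomp Require Import mpoly.
From mathcomp Require Import all_classical all_reals.
Set Implicit Arguments. Unset Strict Implicit. Unset Printing Implicit Defensive.
Import Order.TTheory GRing.Theory Num.Theory.
Local Open Scope ring_scope.
Local Open Scope classical_set_scope.

Section Defs.
Context {R : realType} {n : nat}.

Definition poly_n := mpoly n R.
Definition point := 'I_n -> R.

Definition ev (p : poly_n) (x : point) : R := meval x p.

(* total degree of p (0 for the zero polynomial) *)
Definition tdeg (p : poly_n) : nat := (\max_(m <- msupp p) mdeg m)%N.

Definition sos (p : poly_n) : Prop :=
  exists s : seq poly_n, p = \sum_(q <- s) q ^+ 2.

Definition quadmod (r : nat) (g : 'I_r -> poly_n) (p : poly_n) : Prop :=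
  exists (s0 : poly_n) (s : 'I_r -> poly_n),
    sos s0 /\ (forall i, sos (s i)) /\ p = s0 + \sum_(i < r) s i * g i.

Definition semialg (r : nat) (g : 'I_r -> poly_n) : set point :=
  [set x | forall i, 0 <= ev (g i) x].

Definition cube : set point := [set x | forall i, -1 <= x i <= 1].

Definition supnorm (h : poly_n) : R := sup [set `|ev h x| | x in cube].

Definition one_minus_sqnorm : poly_n :=
  1 - \sum_(i < n) (mpolyX R (mnm1 i)) ^+ 2.

(* f^* = min over S of f (taken as infimum; S is compact here) *)
Definition fmin (f : poly_n) (S : set point) : R := inf [set ev f x | x in S].

Definition eps (f : poly_n) (S : set point) : R := fmin f S / supnorm f.

Definition edist (x y : point) : R := Num.sqrt (\sum_(i < n) (x i - y i) ^+ 2).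

Definition dist_set (a : point) (B : set point) : R := inf [set edist a b | b in B].

Definition hausdorff (A B : set point) : R :=
  Num.max (sup [set dist_set a B | a in A]) (sup [set dist_set b A | b in B]).

End Defs.

From HB Require Import structures.
From mathcomp Require Import all_boot all_order all_algebra.
From mathcomp Require Import mpoly.
From mathcomp Require Import all_classical all_reals.
From mathcomp Require Import trigo.
From mathcomp Require Import polyrcf qpoly.
From mathcomp Require Import ring lra zify.
Import Order.TTheory GRing.Theory Num.Theory.
Local Open Scope ring_scope.

(* A point x0 of the cube with f x0 <= 0 lies in A, and f gains at least f^*
   from x0 to any s in S.  Since 1 - |X|^2 is in Q(g), s lies in the unit ball,
   so the line through s and x0 meets the cube in a chord of length at least
   1/2.  On that chord Markov's inequality bounds the derivative of f by
   8 d^2 ||f||, hence the mean value theorem gives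
   f^* <= 8 d^2 ||f|| |x0 - s|, i.e. dist(x0, S) >= eps(f) / (8 d^2). *)

Lemma nat_ind2 (P : nat -> Prop) : P 0%N -> P 1%N ->
  (forall k, P k -> P k.+1 -> P k.+2) -> forall k, P k.
Proof.
move=> P0 P1 PSS k; suff [] : P k /\ P k.+1 by [].
by elim: k => [|k [IHk IHk1]]; split => //; apply: PSS.
Qed.

Section Chebyshev.
Variable R : realType.

Fixpoint cheb (k : nat) : {poly R} :=
  match k with
  | 0%N => 1
  | 1%N => 'X
  | (k'.+1 as k1).+1 => 2%:P * 'X * cheb k1 - cheb k'
  end.

Lemma chebSS k : cheb k.+2 = 2%:P * 'X * cheb k.+1 - cheb k.
Proof. by []. Qed.

Lemma horner_cheb_cos k t : (cheb k).[cos t] = cos (k%:R * t).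
Proof.
elim/nat_ind2: k => [||k IHk IHk1]; first by rewrite hornerC mul0r cos0.
  by rewrite hornerX mul1r.
rewrite chebSS !hornerE IHk IHk1.
have -> : k.+2%:R * t = k.+1%:R * t + t by rewrite -addn1 natrD mulrDl mul1r.
have -> : k%:R * t = k.+1%:R * t - t by rewrite -[k.+1]addn1 natrD mulrDl mul1r addrK.
rewrite !cosD cosN sinN; ring.
Qed.

Lemma size_cheb k : (size (cheb k) <= k.+1)%N.
Proof.
elim/nat_ind2: k => [||k IHk IHk1]; first by rewrite size_poly1.
  by rewrite size_polyX.
rewrite chebSS; apply: (leq_trans (size_polyD _ _)).
rewrite geq_max size_polyN (leq_trans IHk) ?andbT; last by lia.
have size2X : (size (2%:P * 'X : {poly R})%R <= 2)%N.
  by rewrite mul_polyC (leq_trans (size_scale_leq _ _)) ?size_polyX.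
by apply: (leq_trans (size_polyMleq _ _)); move: size2X IHk1; lia.
Qed.

Lemma deriv_cheb1 k : (cheb k)^`().[1] = k%:R ^+ 2.
Proof.
suff [] : (cheb k).[1] = 1 /\ (cheb k)^`().[1] = k%:R ^+ 2 by [].
elim/nat_ind2: k => [||k [ck dck] [ck1 dck1]].
- by rewrite hornerC derivC horner0 expr0n.
- by rewrite hornerX derivX hornerC expr1n.
rewrite chebSS !derivE !hornerE ck dck ck1 dck1; split; first by ring.
rewrite -[k.+2]addn1 -[k.+1]addn1 !natrD; ring.
Qed.

Lemma cos_natpi k : cos (k%:R * pi) = (-1) ^+ k :> R.
Proof.
elim: k => [|k IHk]; first by rewrite mul0r cos0.
by rewrite -addn1 natrD mulrDl mul1r cosDpi IHk exprD expr1 mulrN1.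
Qed.

End Chebyshev.

Section Markov.
Context {R : realType}.

Lemma prod_XsubC_ge0_at1 {I : Type} (r : seq I) (P : pred I) (a : I -> R) :
  (forall i, P i -> a i <= 1) ->
  0 <= (\prod_(i <- r | P i) ('X - (a i)%:P)).[1] /\
  0 <= (\prod_(i <- r | P i) ('X - (a i)%:P))^`().[1].
Proof.
move=> a_le1.
apply: (big_ind (fun q : {poly R} => 0 <= q.[1] /\ 0 <= q^`().[1])).
- by rewrite hornerC derivC horner0.
- move=> p q [p1 dp1] [q1 dq1]; rewrite derivM !hornerE.
  by split; rewrite ?addr_ge0 ?mulr_ge0.
- by move=> i Pi; rewrite derivXsubC hornerXsubC hornerC subr_ge0 a_le1.
Qed.

Lemma alt_prod_sub_gt0 (y : nat -> R) (N i : nat) : (i < N)%N ->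
  (forall j k, (j < k < N)%N -> y k < y j) ->
  0 < (-1) ^+ i * \prod_(0 <= j < N | j != i) (y i - y j).
Proof.
move=> iN y_decr; rewrite (@big_cat_nat _ _ _ i) //= ?(ltnW iN) //.
have -> : \prod_(0 <= j < i | j != i) (y i - y j) = \prod_(0 <= j < i) (y i - y j).
  by rewrite big_nat_cond [RHS]big_nat_cond; apply: eq_bigl => j; apply/idP/idP; lia.
rewrite -[i in (-1) ^+ i]subn0 -prodr_const_nat mulrA -big_split /=.
rewrite big_nat_cond [X in _ * X]big_nat_cond.
apply: mulr_gt0; apply: prodr_gt0 => j /andP[/andP[lo hi] ji].
  by rewrite mulN1r opprB subr_gt0 y_decr //; lia.
by rewrite subr_gt0 y_decr //; lia.
Qed.

Section ChebyshevNodes.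
Variable d : nat.
Hypothesis d_gt0 : (0 < d)%N.

(* Beyond [d] the nodes are pushed above 1, only to make [node] injective on
   all of [nat], as [lagrange] requires. *)
Definition node (k : nat) : R :=
  if (k <= d)%N then cos (k%:R * pi / d%:R) else k.+2%:R.

Lemma node_arg_itv k : (k <= d)%N -> k%:R * pi / d%:R \in `[0, pi : R].
Proof.
move=> kd; have pi_gt0 := @pi_gt0 R; have d_gt0' : (0 : R) < d%:R by rewrite ltr0n.
rewrite in_itv /= divr_ge0 ?mulr_ge0 ?ler0n ?(ltW pi_gt0) //=.
by rewrite ler_pdivrMr // mulrC ler_wpM2l ?ler_nat // ltW.
Qed.

Lemma node_bound k : (k <= d)%N -> -1 <= node k <= 1.
Proof. by move=> kd; rewrite /node kd cos_geN1 cos_le1. Qed.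

Lemma node_decr j k : (j < k <= d)%N -> node k < node j.
Proof.
move=> /andP[jk kd]; have jd : (j <= d)%N by rewrite (leq_trans (ltnW jk)).
rewrite /node kd jd ltr_cos ?node_arg_itv //.
by rewrite ltr_pM2r ?invr_gt0 ?ltr0n // ltr_pM2r ?pi_gt0 // ltr_nat.
Qed.

Lemma node_inj : injective node.
Proof.
have out_gt1 k : (d < k)%N -> 1 < node k.
  by rewrite /node ltnNge => /negbTE->; rewrite ltr1n.
move=> j k ejk; case: (leqP j d) => jd; case: (leqP k d) => kd.
- case: (ltngtP j k) => [jk|kj|//].
  + by have := node_decr j k; rewrite jk kd ejk ltxx => /(_ isT).
  + by have := node_decr k j; rewrite kj jd ejk ltxx => /(_ isT).
- by have := out_gt1 k kd; rewrite -ejk ltNge (andP (node_bound j jd)).2.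
- by have := out_gt1 j jd; rewrite ejk ltNge (andP (node_bound k kd)).2.
- by move: ejk; rewrite /node leqNgt jd leqNgt kd => /eqP; rewrite eqr_nat => /eqP[].
Qed.

Lemma horner_cheb_node k : (k <= d)%N -> (cheb R d).[node k] = (-1) ^+ k.
Proof.
move=> kd; rewrite /node kd horner_cheb_cos -cos_natpi; congr cos.
have d_neq0 : (d%:R : R) != 0 by rewrite pnatr_eq0 -lt0n.
by field.
Qed.

Local Notation lagr := (tnth (d.+1.-lagrange node)).

Lemma deriv1_lagrange_expansion (p : {poly R}) : (size p <= d.+1)%N ->
  p^`().[1] = \sum_(i < d.+1) p.[node i] * (lagr i)^`().[1].
Proof.
move=> sp; rewrite {1}(lagrange_gen (ltn0Sn d) node_inj sp) raddf_sum horner_sum.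
by apply: eq_bigr => i _; rewrite /= deriv_mulC hornerM hornerC.
Qed.

Lemma lagrange_deriv1_sign (i : 'I_d.+1) : 0 <= (-1) ^+ i * (lagr i)^`().[1].
Proof.
rewrite lagrangeE //=; last exact: node_inj.
rewrite deriv_mulC hornerM hornerC.
set P := \prod_(_ < _ | _) _.
have [_ dP1_ge0] := prod_XsubC_ge0_at1 (index_enum 'I_d.+1) (fun j => j != i)
  (fun j => node j) (fun j _ => (andP (node_bound j (ltnSE (ltn_ord j)))).2).
have sP_gt0 : 0 < (-1) ^+ i * P.[node i].
  rewrite /P horner_prod; under eq_bigr do rewrite hornerXsubC.
  rewrite -(big_mkord (fun j => j != i) (fun j => node i - node j)).
  by apply: alt_prod_sub_gt0 => // j k /andP[jk kd]; apply: node_decr; rewrite jk.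
have P_neq0 : P.[node i] != 0 by apply: contraTneq sP_gt0 => ->; rewrite mulr0 ltxx.
have -> : (-1) ^+ i * (P.[node i]^-1 * P^`().[1]) =
          ((-1) ^+ i * P.[node i]) * P.[node i]^-1 ^+ 2 * P^`().[1] by field.
by apply: mulr_ge0 => //; apply: mulr_ge0; [exact: ltW | exact: sqr_ge0].
Qed.

Lemma sum_alt_lagrange_deriv1 :
  \sum_(i < d.+1) (-1) ^+ i * (lagr i)^`().[1] = d%:R ^+ 2.
Proof.
rewrite -deriv_cheb1 deriv1_lagrange_expansion ?size_cheb //.
by apply: eq_bigr => i _; rewrite horner_cheb_node // -ltnS.
Qed.

End ChebyshevNodes.

(* Interpolating at the Chebyshev nodes, |p'(1)| <= M * sum_i |L_i'(1)|; the
   L_i'(1) alternate in sign, so this sum is T_d'(1) = d^2. *)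
Lemma markov_deriv1 {d : nat} {p : {poly R}} {M : R} :
  (size p <= d.+1)%N -> (forall t, -1 <= t <= 1 -> `|p.[t]| <= M) ->
  `|p^`().[1]| <= d%:R ^+ 2 * M.
Proof.
case: d => [|d] sp p_le.
  by rewrite (size1_polyC sp) derivC horner0 normr0 expr0n /= mul0r.
have d_gt0 := ltn0Sn d; have alt_ge0 := lagrange_deriv1_sign _ d_gt0.
rewrite (deriv1_lagrange_expansion _ d_gt0 p sp) -(sum_alt_lagrange_deriv1 _ d_gt0).
rewrite mulr_suml; apply: (le_trans (ler_norm_sum _ _ _)); apply: ler_sum => i _.
have abs_L' : `|(tnth (d.+2.-lagrange (node d.+1)) i)^`().[1]| =
    (-1) ^+ i * (tnth (d.+2.-lagrange (node d.+1)) i)^`().[1].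
  by rewrite -[RHS]ger0_norm // normrM normrX normrN1 expr1n mul1r.
rewrite normrM abs_L' mulrC ler_wpM2l //.
exact/p_le/node_bound/ltnSE/ltn_ord.
Qed.

Lemma markov_segment {d : nat} {p : {poly R}} {M c h : R} :
  (size p <= d.+1)%N -> (forall t, 0 <= t <= 1 -> `|p.[c - t * h]| <= M) ->
  `|p^`().[c]| * `|h| <= 2 * (d%:R ^+ 2 * M).
Proof.
move=> sp p_le.
pose q : {poly R} := (c - h / 2)%:P + (h / 2)%:P * 'X.
have horner_q t : q.[t] = c - (1 - t) / 2 * h by rewrite /q !hornerE; field.
have size_q : (size q <= 2)%N.
  rewrite (leq_trans (size_polyD _ _)) // geq_max (leq_trans (size_polyC_leq1 _)) //=.
  by rewrite mul_polyC (leq_trans (size_scale_leq _ _)) ?size_polyX.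
have size_pq : (size (p \Po q) <= d.+1)%N.
  apply: (leq_trans (size_comp_poly_leq _ _)).
  by move: sp size_q; move: (size p) (size q) => u v; nia.
have pq_le t : -1 <= t <= 1 -> `|(p \Po q).[t]| <= M.
  by move=> /andP[t1 t2]; rewrite horner_comp horner_q p_le //; apply/andP; split; lra.
have dq : q^`() = (h / 2)%:P by rewrite /q !derivE add0r mulr1.
have := markov_deriv1 size_pq pq_le.
rewrite deriv_comp hornerM horner_comp horner_q subrr !mul0r subr0 dq hornerC.
rewrite normrM [`|h / 2|]normrM (ger0_norm (x := 2^-1)) ?invr_ge0 ?ler0n // mulrA.
lra.
Qed.

Lemma markov_interval {d : nat} {p : {poly R}} {M a b c : R} :
  (size p <= d.+1)%N -> (forall t, a <= t <= b -> `|p.[t]| <= M) ->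
  a <= c <= b -> `|p^`().[c]| * (b - a) <= 4 * (d%:R ^+ 2 * M).
Proof.
move=> sp p_le /andP[ac cb].
have dp_ge0 : 0 <= `|p^`().[c]| by [].
have [h [seg_le long]] : exists h : R, `|p^`().[c]| * `|h| <= 2 * (d%:R ^+ 2 * M) /\
                                   b - a <= 2 * `|h|.
  have [ba_le|ab_le] := lerP (b - c) (c - a).
    exists (c - a); split; last by rewrite ger0_norm; lra.
    by apply: markov_segment => // t /andP[t0 t1]; apply: p_le; apply/andP; split; nra.
  exists (c - b); split; last by rewrite ler0_norm; lra.
  by apply: markov_segment => // t /andP[t0 t1]; apply: p_le; apply/andP; split; nra.
apply: (le_trans (ler_wpM2l dp_ge0 long)); lra.
Qed.

End Markov.

Section LineRestriction.
Context {R : comNzRingType} {n : nat}.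
Implicit Types (s w : 'I_n -> R) (f : {mpoly R[n]}).

Definition mpoly_line s w f : {poly R} :=
  mmap (@polyC R) (fun i => (s i)%:P + (w i)%:P * 'X) f.

Lemma horner_mpoly_line s w f t :
  (mpoly_line s w f).[t] = meval (fun i => s i + w i * t) f.
Proof.
rewrite /mpoly_line /mmap horner_sum mevalE; apply: eq_bigr => m _.
rewrite hornerM hornerC horner_prod; congr (_ * _); apply: eq_bigr => i _.
by rewrite horner_exp !hornerE.
Qed.

Lemma size_mpoly_line s w f : (size (mpoly_line s w f) <= msize f)%N.
Proof.
rewrite msizeE (leq_trans (size_sum _ _ _)) //.
apply/bigmax_leqP_seq => m m_f _; rewrite (leq_trans _ (leq_bigmax_seq _ m_f _)) //.
rewrite mul_polyC (leq_trans (size_scale_leq _ _)) // /mmap1 mdegE.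
apply: (big_ind2 (fun (P : {poly R}) k => size P <= k.+1)%N).
- by rewrite size_poly1.
- move=> P1 k1 P2 k2 sP1 sP2; apply: (leq_trans (size_polyMleq _ _)).
  by move: sP1 sP2; lia.
- move=> i _; rewrite (leq_trans (size_poly_exp_leq _ _)) // ltnS.
  have size_lin : (size ((s i)%:P + (w i)%:P * 'X)%R <= 2)%N.
    rewrite (leq_trans (size_polyD _ _)) // geq_max (leq_trans (size_polyC_leq1 _)) //=.
    by rewrite mul_polyC (leq_trans (size_scale_leq _ _)) ?size_polyX.
  by move: size_lin; move: (size _) => k; nia.
Qed.

End LineRestriction.

Lemma msize_le_tdeg {R : realType} {n : nat} (f : @poly_n R n) :
  (msize f <= (tdeg f).+1)%N.
Proof.
rewrite msizeE; apply/bigmax_leqP_seq => m m_f _.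
by rewrite ltnS /tdeg (leq_bigmax_seq (F := mdeg)).
Qed.

Lemma half_step_le1 {R : realFieldType} (s u : R) : s ^+ 2 <= 1 -> u ^+ 2 <= 1 ->
  `|s - u / 2| <= 1 \/ `|s + u / 2| <= 1.
Proof.
move=> s1 u1; have /andP[s_ge s_le] : -1 <= s <= 1 by apply/andP; split; nra.
have /andP[u_ge u_le] : -1 <= u <= 1 by apply/andP; split; nra.
by case: (lerP 0 (s * u)) => su; [left | right]; rewrite ler_norml; apply/andP; split; nra.
Qed.

Lemma quarter_step_le1 {R : realFieldType} (s1 s2 u1 u2 : R) :
  s1 ^+ 2 + s2 ^+ 2 <= 1 -> u1 ^+ 2 + u2 ^+ 2 <= 1 ->
  1 < `|s1| + `|u1| / 2 -> `|s2| + `|u2| / 4 <= 1.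
Proof.
rewrite -[s1 ^+ 2]real_normK ?num_real // -[s2 ^+ 2]real_normK ?num_real //.
rewrite -[u1 ^+ 2]real_normK ?num_real // -[u2 ^+ 2]real_normK ?num_real //.
have := normr_ge0 s1; have := normr_ge0 s2; have := normr_ge0 u1; have := normr_ge0 u2.
move: `|s1| `|s2| `|u1| `|u2| => A B p q q0 p0 B0 A0 sAB upq A_far.
rewrite leNgt; apply/negP => B_far.
have p1 : p <= 1 by nra.
have q1 : q <= 1 by nra.
have A2_far : (1 - p / 2) ^+ 2 < A ^+ 2 by nra.
have B2_far : (1 - q / 4) ^+ 2 < B ^+ 2 by nra.
nra.
Qed.

Section CubeChords.
Context {R : realType} {n : nat}.
Implicit Types (s u y : 'I_n -> R).

Lemma ler_sqr_sum (F : 'I_n -> R) i : F i ^+ 2 <= \sum_j F j ^+ 2.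
Proof. by rewrite (bigD1 i) //= lerDl sumr_ge0 // => j _; apply: sqr_ge0. Qed.

Lemma ler_sqr2_sum (F : 'I_n -> R) i k : i != k ->
  F i ^+ 2 + F k ^+ 2 <= \sum_j F j ^+ 2.
Proof.
move=> ik; rewrite (bigD1 i) //= (bigD1 k) 1?eq_sym //= addrA lerDl.
by rewrite sumr_ge0 // => j _; apply: sqr_ge0.
Qed.

Lemma ball_sub_cube {s} : \sum_i s i ^+ 2 <= 1 -> cube s.
Proof.
move=> s1 i; have si1 := le_trans (ler_sqr_sum s i) s1.
by apply/andP; split; nra.
Qed.

Lemma not_cubeP {y} : ~ cube y -> exists i, 1 < `|y i|.
Proof. by move=> /existsNP[i yi]; exists i; rewrite ltNge ler_norml; apply/negP. Qed.

Lemma cube_line {s u} {a b t : R} :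
  cube (fun i => s i + u i * a) -> cube (fun i => s i + u i * b) ->
  a <= t <= b -> cube (fun i => s i + u i * t).
Proof.
move=> cube_a cube_b /andP[a_t t_b] i.
have [ab|ba] := ltrP a b; last by have -> : t = a by lra.
have /andP[A1 A2] := cube_a i; have /andP[B1 B2] := cube_b i.
have -> : s i + u i * t =
  ((b - t) * (s i + u i * a) + (t - a) * (s i + u i * b)) / (b - a).
  by field; rewrite subr_eq0 gt_eqF.
rewrite ler_pdivrMr ?ler_pdivlMr ?subr_gt0 //; apply/andP; split; nra.
Qed.

(* If neither s - u/2 nor s + u/2 is in the cube, two distinct coordinates
   leave [-1, 1], and the ball constraints then keep s +- u/4 in the cube. *)
Lemma cube_chord {s u} : \sum_i s i ^+ 2 <= 1 -> \sum_i u i ^+ 2 = 1 ->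
  exists a b : R, [/\ a <= 0 <= b, 2^-1 <= b - a,
    cube (fun i => s i + u i * a) & cube (fun i => s i + u i * b)].
Proof.
move=> s_ball u_unit.
have [cube_minus|out_minus] := pselect (cube (fun i => s i + u i * - 2^-1)).
  exists (- 2^-1), 0; split => //; [rewrite lexx andbT; lra | lra |].
  by move=> i; rewrite mulr0 addr0; apply: ball_sub_cube.
have [cube_plus|out_plus] := pselect (cube (fun i => s i + u i * 2^-1)).
  exists 0, 2^-1; split => //; [rewrite lexx /=; lra | lra |].
  by move=> i; rewrite mulr0 addr0; apply: ball_sub_cube.
have s1 k : s k ^+ 2 <= 1 by apply: le_trans s_ball; apply: ler_sqr_sum.
have u1 k : u k ^+ 2 <= 1 by rewrite -u_unit ler_sqr_sum.
have s2 k l : k != l -> s k ^+ 2 + s l ^+ 2 <= 1.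
  by move=> kl; apply: le_trans s_ball; apply: ler_sqr2_sum.
have u2 k l : k != l -> u k ^+ 2 + u l ^+ 2 <= 1.
  by move=> kl; rewrite -u_unit; apply: ler_sqr2_sum.
have step_le k (e : R) : `|s k + u k * e| <= `|s k| + `|u k| * `|e|.
  by rewrite -normrM ler_normD.
have [i /= out_i] := not_cubeP out_minus.
have [j /= out_j] := not_cubeP out_plus.
have half_ge0 : 0 <= 2^-1 :> R by rewrite invr_ge0 ler0n.
have far_i : 1 < `|s i| + `|u i| / 2.
  apply: (lt_le_trans out_i); apply: le_trans (step_le _ _) _.
  by rewrite normrN (ger0_norm half_ge0).
have far_j : 1 < `|s j| + `|u j| / 2.
  apply: (lt_le_trans out_j); apply: le_trans (step_le _ _) _.
  by rewrite (ger0_norm half_ge0).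
have ij : i != j.
  apply/eqP => eij; subst j; rewrite mulrN in out_i.
  by have [] := half_step_le1 _ _ (s1 i) (u1 i); rewrite leNgt ?out_i ?out_j.
have quarter_in k : `|s k| + `|u k| / 4 <= 1.
  have [<-|ik] := eqVneq i k.
    by rewrite eq_sym in ij; exact: quarter_step_le1 _ _ _ _ (s2 j i ij) (u2 j i ij) far_j.
  exact: quarter_step_le1 _ _ _ _ (s2 i k ik) (u2 i k ik) far_i.
have quarter_ge0 : 0 <= 4^-1 :> R by rewrite invr_ge0 ler0n.
exists (- 4^-1), 4^-1; split.
- by rewrite oppr_le0 quarter_ge0.
- by rewrite opprK; lra.
- move=> k; rewrite -ler_norml; apply: le_trans (step_le _ _) _.
  by rewrite normrN (ger0_norm quarter_ge0) quarter_in.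
- move=> k; rewrite -ler_norml; apply: le_trans (step_le _ _) _.
  by rewrite (ger0_norm quarter_ge0) quarter_in.
Qed.

End CubeChords.

Section Lipschitz.
Context {R : realType} {n : nat}.
Implicit Types (s x : 'I_n -> R) (f : {mpoly R[n]}).

Lemma edist_eq0 {x s} : edist x s = 0 -> x =1 s.
Proof.
move=> /eqP; rewrite sqrtr_eq0 => sum_le0 i; apply/eqP; rewrite -subr_eq0 -sqrf_eq0.
by rewrite eq_le sqr_ge0 (le_trans (ler_sqr_sum (fun j => x j - s j) i)).
Qed.

Lemma unit_direction {x s} : 0 < edist x s ->
  \sum_i ((x i - s i) / edist x s) ^+ 2 = 1.
Proof.
move=> L_gt0; have sum_ge0 : 0 <= \sum_i (x i - s i) ^+ 2.
  by apply: sumr_ge0 => i _; apply: sqr_ge0.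
under eq_bigr do rewrite expr_div_n.
by rewrite -mulr_suml {1}/edist -[X in X / _]sqr_sqrtr // divff // sqrf_eq0 gt_eqF.
Qed.

Lemma mpoly_lipschitz {f s x} {M : R} :
  (forall y, cube y -> `|ev f y| <= M) -> \sum_i s i ^+ 2 <= 1 -> cube x ->
  `|ev f x - ev f s| <= 8 * (tdeg f)%:R ^+ 2 * M * edist x s.
Proof.
move=> f_le s_ball cube_x; set L := edist x s.
have [L_le0|L_gt0] := lerP L 0.
  have L0 : L = 0 by apply/eqP; rewrite eq_le L_le0 sqrtr_ge0.
  by rewrite /ev (meval_eq f (edist_eq0 L0)) subrr normr0 L0 mulr0.
pose u i := (x i - s i) / L.
have x_on_line i : s i + u i * L = x i by rewrite /u divfK ?gt_eqF // addrC subrK.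
have [a [b [/andP[a_le0 b_ge0] ab_long cube_a cube_b]]] :=
  cube_chord s_ball (unit_direction L_gt0).
have [b' [bb' Lb' cube_b']] :
    exists b', [/\ b <= b', L <= b' & cube (fun i => s i + u i * b')].
  have [bL|Lb] := lerP b L; first by exists L; split => // i; rewrite x_on_line.
  by exists b; split => //; apply: ltW.
pose q := mpoly_line s u f.
have q_le t : a <= t <= b' -> `|q.[t]| <= M.
  by move=> t_ab'; rewrite horner_mpoly_line; apply/f_le/(cube_line cube_a cube_b').
have size_q : (size q <= (tdeg f).+1)%N :=
  leq_trans (size_mpoly_line _ _ _) (msize_le_tdeg _).
have [c] := poly_mvt q L_gt0; rewrite in_itv /= subr0 => /andP[c_gt0 c_ltL] q_mvt.
have c_in : a <= c <= b' by apply/andP; split; lra.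
have := markov_interval size_q q_le c_in.
have qL : q.[L] = ev f x by rewrite horner_mpoly_line; apply: meval_eq.
have q0 : q.[0] = ev f s.
  by rewrite horner_mpoly_line; apply: meval_eq => i; rewrite mulr0 addr0.
rewrite -qL -q0 q_mvt normrM (gtr0_norm L_gt0) ler_pM2r //.
have := normr_ge0 (q^`().[c]); nra.
Qed.

End Lipschitz.

Local Open Scope classical_set_scope.

Section SemialgebraicSets.
Context {R : realType} {n : nat}.
Implicit Types (p f : @poly_n R n) (x y s : 'I_n -> R).

Lemma ev_sos_ge0 p x : sos p -> 0 <= ev p x.
Proof.
case=> qs ->; rewrite /ev (big_morph _ (mevalD x) (meval0 x)).
by apply: sumr_ge0 => q _; rewrite mevalM -expr2 sqr_ge0.
Qed.

Lemma quadmod_ball {r : nat} {g : 'I_r -> @poly_n R n} {s} :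
  quadmod g one_minus_sqnorm -> semialg g s -> \sum_i s i ^+ 2 <= 1.
Proof.
move=> [s0 [sg [sos_s0 [sos_sg quad]]]] gs_ge0.
have := congr1 (ev ^~ s) quad; rewrite /ev /one_minus_sqnorm mevalB meval1 mevalD.
rewrite !(big_morph _ (mevalD s) (meval0 s)).
under eq_bigr do rewrite mevalM mevalXU -expr2.
move=> ev_quad; rewrite -subr_ge0 ev_quad addr_ge0 ?ev_sos_ge0 //.
apply: sumr_ge0 => i _; rewrite mevalM.
by apply: mulr_ge0; [exact: ev_sos_ge0 | exact: gs_ge0].
Qed.

Lemma ev_bounded_on_cube f : exists B, forall y, cube y -> `|ev f y| <= B.
Proof.
exists (\sum_(m <- msupp f) `|f@_m|) => y cube_y.
rewrite /ev mevalE (le_trans (ler_norm_sum _ _ _)) // ler_sum // => m _.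
rewrite normrM ler_piMr // normr_prod prodr_ile1 // => i _.
by rewrite normrX exprn_ge0 //= exprn_ile1 // ler_norml cube_y.
Qed.

Lemma ev_le_supnorm f y : cube y -> `|ev f y| <= supnorm f.
Proof.
move=> cube_y; have [B f_le] := ev_bounded_on_cube f.
apply: sup_upper_bound; last by exists y.
by split; [exists `|ev f y|, y | exists B => _ [z /f_le ? <-]].
Qed.

Lemma fmin_le f {S : set ('I_n -> R)} {s} : S `<=` cube -> S s -> fmin f S <= ev f s.
Proof.
move=> S_cube S_s; have [B f_le] := ev_bounded_on_cube f.
apply: ge_inf; last by exists s.
by exists (- B) => _ [y /S_cube/f_le + <-]; rewrite ler_norml => /andP[].
Qed.

End SemialgebraicSets.

Section Hausdorff.
Context {R : realType} {n : nat}.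
Implicit Types (a b : 'I_n -> R) (A B : set ('I_n -> R)).

Lemma edist_cube_le a b : cube a -> cube b -> edist a b <= Num.sqrt (4 *+ n).
Proof.
move=> cube_a cube_b; rewrite ler_wsqrtr // -[n in 4 *+ n]card_ord -sumr_const.
apply: ler_sum => i _; have /andP[? ?] := cube_a i; have /andP[? ?] := cube_b i; nra.
Qed.

Lemma dist_set_le a {B b} : B b -> dist_set a B <= edist a b.
Proof.
by move=> B_b; apply: ge_inf; [exists 0 => _ [? _ <-]; apply: sqrtr_ge0 | exists b].
Qed.

Lemma dist_set_ge a B (e : R) : B !=set0 -> (forall b, B b -> e <= edist a b) ->
  e <= dist_set a B.
Proof.
move=> [b0 B_b0] e_le; apply: lb_le_inf; first by exists (edist a b0), b0.
by move=> _ [b /e_le ? <-].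
Qed.

Lemma le_hausdorff A B a (e : R) : A `<=` cube -> B `<=` cube -> B !=set0 ->
  A a -> e <= dist_set a B -> e <= hausdorff A B.
Proof.
move=> A_cube B_cube [b0 B_b0] A_a e_le; rewrite /hausdorff le_max.
apply/orP; left; apply: (le_trans e_le); apply: sup_upper_bound; last by exists a.
split; first by exists (dist_set a B), a.
exists (Num.sqrt (4 *+ n)) => _ [a' /A_cube cube_a' <-].
by apply: le_trans (dist_set_le a' B_b0) _; apply: edist_cube_le => //; apply: B_cube.
Qed.

End Hausdorff.

Theorem mainTheorem7 (R : realType) (n r : nat) (g : 'I_r -> @poly_n R n)
    (f : @poly_n R n) :
  quadmod g one_minus_sqnorm ->
  (forall i, supnorm (g i) <= 2^-1) ->
  semialg g !=set0 ->
  0 < fmin f (semialg g) ->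
  (exists x, cube x /\ ~ semialg g x /\ ev f x <= 0) ->
  let A := [set x | cube x /\ ev f x <= 3 / 4 * fmin f (semialg g)] in
  eps f (semialg g) / (8 * (tdeg f)%:R ^+ 2) <= hausdorff A (semialg g).
Proof.
move=> g_quad _ S_ne fmin_gt0 [x0 [cube_x0 [_ fx0_le0]]]; cbv zeta.
set A := [set x | _]; set S := semialg g; set fm := fmin f S; set M := supnorm f.
set K := 8 * (tdeg f)%:R ^+ 2 * M.
have S_ball s : S s -> \sum_i s i ^+ 2 <= 1 := quadmod_ball g_quad.
have S_cube : S `<=` cube by move=> s /S_ball/ball_sub_cube.
have fm_le s : S s -> fm <= K * edist x0 s.
  move=> S_s; have := mpoly_lipschitz (ev_le_supnorm f) (S_ball s S_s) cube_x0.
  have := fmin_le f S_cube S_s; rewrite -/fm distrC => fm_le_fs /(le_trans (ler_norm _)).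
  by apply: le_trans; lra.
have [s0 S_s0] := S_ne.
have K_gt0 : 0 < K.
  have := fm_le s0 S_s0; have := sqrtr_ge0 (\sum_i (x0 i - s0 i) ^+ 2).
  rewrite /edist; nra.
have -> : eps f S / (8 * (tdeg f)%:R ^+ 2) = fm / K.
  by rewrite /eps -/fm -/M /K -mulrA -invfM [M * _]mulrC.
apply: (le_hausdorff A S x0) => //; first by move=> x [].
  by split => //; rewrite -/S -/fm; lra.
by apply: dist_set_ge => // s S_s; rewrite ler_pdivrMr // mulrC fm_le.
Qed.
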